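(* Let $G$ be a finite abelian group, $n$ a positive integer, and $\mathcal M=(I_n(\hat G),\le)$. Then $\mathrm{Rep}(\mathcal M,\hat G)$ is the full subcategory of $\mathrm{Rep}(I_n(\hat G),\hat G)$ whose objects are direct sums of the simple object $\hat G^{\oplus n}$.
   Context: $\hat G=G\sqcup\{0\}$ with $0$ absorbing. $\mathrm{Vect}_{\hat G}$: objects are finite pointed sets with an action of $\hat G$ ($0v=0$, $g0=0$) such that $G$ acts freely on nonzero elements; morphisms $f$ satisfy $f(0)=0$, $f(gv)=gf(v)$, $f(v_1)=f(v_2)\neq0\Rightarrow Gv_1=Gv_2$; $\oplus$ is disjoint union with zeros identified. $I_n(\hat G)$ is the monoid of $n\times n$ matrices over $\hat G$ with at most one nonzero entry in each row and column, under matrix multiplication, with $G$ as scalar matrices. $\hat G^{\oplus n}=\{0\}\cup\{g\mathbf e_i: g\in G, 1\le i\le n\}$ with $I_n(\hat G)$ acting by matrix multiplication. $\mathrm{Rep}(I_n(\hat G),\hat G)$: objects $V$ of $\mathrm{Vect}_{\hat G}$ with an action $a\mapsto V(a)$ of $I_n(\hat G)$ by morphisms of $\mathrm{Vect}_{\hat G}$, zero matrix acting as zero and $g\in G$ as the scalar $g$; morphisms are equivariant morphisms. On $I_n(\hat G)$, and more generally on $\mathrm{End}_{\hat G}(V)$, the partial order is $A\le B$ iff for all $x$, $Ax\neq0$ implies $Bx=Ax$. $\mathrm{Rep}(\mathcal M,\hat G)$ is the full subcategory of $\mathrm{Rep}(I_n(\hat G),\hat G)$ of those $V$ such that whenever $\bigvee_{a\in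 I}a$ exists in $I_n(\hat G)$ for a subset $I$, the join $\bigvee_{a\in I}V(a)$ exists in $\mathrm{End}_{\hat G}(V)$ and equals $V(\bigvee_{a\in I}a)$. *)

From HB Require Import structures.
From mathcomp Require Import all_boot all_order all_algebra all_fingroup.
Unset Printing Implicit Defensive.

Local Open Scope ring_scope.
Local Open Scope group_scope.

Section Defs.
Variables (gT : finGroupType) (n : nat).

(* \hat G = G ⊔ {0} is modelled as option gT, None = 0. *)
Definition ghat := option gT.

Definition gmul (a b : ghat) : ghat :=
  match a, b with Some x, Some y => Some (x * y) | _, _ => None end.

Definition gmx := 'M[ghat]_n.

Definition pmono (A : gmx) : bool :=
  [forall i, #|[set j | A i j != None]| <= 1]%N &&
  [forall j, #|[set i | A i j != None]| <= 1]%N.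

(* matrix multiplication over \hat G (the sum (AB)_ij = sum_k A_ik B_kj has at most
   one nonzero term when A is in I_n(\hat G)) *)
Definition pmmul (A B : gmx) : gmx :=
  \matrix_(i, j) match [pick k | (A i k != None) && (B k j != None)] with
                 | Some k => gmul (A i k) (B k j)
                 | None => None
                 end.

Definition zero_gmx : gmx := \matrix_(i, j) None.
Definition scal_gmx (g : gT) : gmx := \matrix_(i, j) if i == j then Some g else None.

(* A representation-candidate: a finite pointed set with a \hat G action
   (0 acting as the constant zero) and an action of matrices *)
Record rep := Rep {
  carrier :> finType;
  zero : carrier;
  gact : gT -> carrier -> carrier;
  mact : gmx -> carrier -> carrier }.

Definition vobj (V : rep) : Prop :=
  [/\ forall v, gact V 1 v = v,
      forall g h v, gact V (g * h) v = gact V g (gact V h v),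
      forall g, gact V g (zero V) = zero V
    & forall g v, v <> zero V -> gact V g v = v -> g = 1].

Definition vmorph (V W : rep) (f : V -> W) : Prop :=
  [/\ f (zero V) = zero W,
      forall g v, f (gact V g v) = gact W g (f v)
    & forall v1 v2, f v1 = f v2 -> f v1 <> zero W -> exists g, v2 = gact V g v1].

Definition is_rep_In (V : rep) : Prop :=
  [/\ vobj V,
      forall A, pmono A -> vmorph V V (mact V A),
      forall A B, pmono A -> pmono B -> forall v, mact V (pmmul A B) v = mact V A (mact V B v),
      forall v, mact V zero_gmx v = zero V
    & forall g v, mact V (scal_gmx g) v = gact V g v].

Definition rep_morph (V W : rep) (f : V -> W) : Prop :=
  vmorph V W f /\ forall A, pmono A -> forall v, f (mact V A v) = mact W A (f v).

Definition rep_iso (V W : rep) : Prop :=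
  exists (f : V -> W) (h : W -> V),
    [/\ rep_morph V W f, rep_morph W V h, cancel f h & cancel h f].

(* \hat G^{\oplus n} = {0} ∪ {g e_i}, with None = 0 and Some (g, i) = g e_i *)
Definition std_carrier : finType := option (gT * 'I_n).

Definition std_mact (A : gmx) (x : std_carrier) : std_carrier :=
  match x with
  | None => None
  | Some (h, i) =>
      match [pick j | A j i != None] with
      | Some j => match A j i with Some a => Some (a * h, j) | None => None end
      | None => None
      end
  end.

Definition std_gact (g : gT) (x : std_carrier) : std_carrier :=
  match x with None => None | Some (h, i) => Some (g * h, i) end.

Definition std_rep : rep := Rep std_carrier None std_gact std_mact.

(* direct sum of k copies of \hat G^{\oplus n}: disjoint union of k copies
   with the zeros identified; Some (h, i, c) = h e_i in the c-th summand *)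
Definition sum_carrier (k : nat) : finType := option (gT * 'I_n * 'I_k).

Definition sum_mact (k : nat) (A : gmx) (x : sum_carrier k) : sum_carrier k :=
  match x with
  | None => None
  | Some (h, i, c) =>
      match std_mact A (Some (h, i)) with
      | Some (h', j) => Some (h', j, c)
      | None => None
      end
  end.

Definition sum_gact (k : nat) (g : gT) (x : sum_carrier k) : sum_carrier k :=
  match x with None => None | Some (h, i, c) => Some (g * h, i, c) end.

Definition sum_std (k : nat) : rep :=
  Rep (sum_carrier k) None (sum_gact k) (sum_mact k).

Definition is_lub (T : Type) (le : T -> T -> Prop) (P S : T -> Prop) (x : T) : Prop :=
  [/\ P x, forall a, S a -> le a x
    & forall y, P y -> (forall a, S a -> le a y) -> le x y].

Definition end_le (V : rep) (f f' : V -> V) : Prop :=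
  forall x, f x <> zero V -> f' x = f x.

Definition mx_le (A B : gmx) : Prop :=
  forall x : std_carrier, std_mact A x <> None -> std_mact B x = std_mact A x.

Definition is_rep_M (V : rep) : Prop :=
  is_rep_In V /\
  forall (S : gmx -> Prop), (forall A, S A -> pmono A) ->
  forall m, is_lub _ mx_le (fun A => pmono A) S m ->
    is_lub _ (end_le V) (vmorph V V)
           (fun f => exists A, S A /\ f =1 mact V A) (mact V m).

Definition rep_simple (V : rep) : Prop :=
  [/\ is_rep_In V, exists v, v <> zero V
    & forall S : V -> Prop, S (zero V) ->
        (forall g v, S v -> S (gact V g v)) ->
        (forall A v, pmono A -> S v -> S (mact V A v)) ->
        (forall v, S v -> v = zero V) \/ (forall v, S v)].

End Defs.

(* In I_n(Ĝ) the identity is the join of the diagonal matrix units E_ii, and a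
   join of monomial matrices is computed column by column.  Hence V preserves
   joins exactly when every nonzero vector is fixed by some V(E_ii): if v were
   killed by every E_ii, the Ĝ-endomorphism killing the G-orbit of v would be an
   upper bound of the V(E_ii) that is not above V(1) = id; conversely, on a
   vector fixed by E_ii a matrix acts through its i-th column, which a join
   shares with one of its joinands.  For such V, pick representatives r_c of the
   G-orbits of nonzero vectors fixed by E_(i0,i0); then h e_i in the c-th summand
   maps to h E_(i,i0) r_c, an isomorphism from a direct sum of copies of Ĝ^n onto
   V.  Commutativity of G makes this map, and the matrix action on Ĝ^n itself,
   commute with the scalars. *)

From Pilot Require Import Defs.
From mathcomp Require Import all_boot all_order all_algebra all_fingroup.
From Stdlib Require Import Classical.

Set Implicit Arguments.
Unset Strict Implicit.
Unset Printing Implicit Defensive.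

Local Open Scope ring_scope.
Local Open Scope group_scope.

Lemma abelianT_mulgC (gT : finGroupType) : abelian [set: gT] -> forall x y : gT, x * y = y * x.
Proof. by move=> hab x y; apply: (centsP hab); rewrite inE. Qed.

Section MonomialMatrices.
Variables (gT : finGroupType) (n : nat).
Local Notation gmx := (gmx gT n).
Local Notation pm := (pmono gT n).
Local Notation pmul := (pmmul gT n).
Local Notation smact := (std_mact gT n).

Definition delta_gmx (j i : 'I_n) (g : gT) : gmx :=
  \matrix_(x, y) if (x == j) && (y == i) then Some g else None.

Lemma pmono_col_uniq (A : gmx) i x y :
  pm A -> A x i != None -> A y i != None -> x = y.
Proof. by case/andP=> _ /forallP/(_ i)/card_le1_eqP hi hx hy; apply: hi; rewrite inE. Qed.

Lemma pmono_row_uniq (A : gmx) j x y :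
  pm A -> A j x != None -> A j y != None -> x = y.
Proof. by case/andP=> /forallP/(_ j)/card_le1_eqP hj _ hx hy; apply: hj; rewrite inE. Qed.

Lemma pmono_col_some (A : gmx) i j a : pm A -> A j i = Some a ->
  forall x, A x i != None -> x = j.
Proof. by move=> hA ha x hx; apply: (pmono_col_uniq hA hx); rewrite ha. Qed.

Lemma pmono_by_support (A : gmx) (r c : 'I_n -> 'I_n) :
  (forall i j, A i j != None -> j = r i) -> (forall i j, A i j != None -> i = c j) -> pm A.
Proof.
move=> hr hc; apply/andP; split; apply/forallP => i; apply/card_le1_eqP => x y;
  rewrite !inE => hx hy.
- by rewrite (hr _ _ hx) (hr _ _ hy).
- by rewrite (hc _ _ hx) (hc _ _ hy).
Qed.

Lemma pmono_subsupport (A B : gmx) :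
  pm A -> (forall x y, B x y != None -> A x y != None) -> pm B.
Proof.
case/andP=> /forallP hr /forallP hc hBA; apply/andP; split; apply/forallP => i.
- apply: leq_trans (hr i); apply/subset_leq_card/subsetP => x; rewrite !inE; exact: hBA.
- apply: leq_trans (hc i); apply/subset_leq_card/subsetP => x; rewrite !inE; exact: hBA.
Qed.

Lemma pmono_delta j i g : pm (delta_gmx j i g).
Proof.
apply: (@pmono_by_support _ (fun=> i) (fun=> j)) => x y; rewrite mxE.
- by case: (y =P i) => // _; rewrite andbF.
- by case: (x =P j).
Qed.

Lemma pmono_scal g : pm (scal_gmx gT n g).
Proof. by apply: (@pmono_by_support _ id id) => x y; rewrite mxE; case: (x =P y). Qed.

Lemma pmono_colP (A : gmx) i : pm A ->
  (forall x, A x i = None) \/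
  exists j a, A j i = Some a /\ forall x, A x i != None -> x = j.
Proof.
move=> hA; case: (pickP (fun x => A x i != None)) => [j | none].
  case e: (A j i) => [a|] // _; right; exists j, a; split=> // x hx.
  exact: pmono_col_some hA e x hx.
by left=> x; apply/eqP/negbFE/none.
Qed.

Lemma pmmul_entry (A B : gmx) x y k b :
  (forall k', B k' y != None -> k' = k) -> B k y = Some b ->
  pmul A B x y = gmul gT (A x k) (Some b).
Proof.
move=> hk hb; rewrite mxE; case: pickP => [k' /andP[_ /hk ->] | none].
  by rewrite hb.
by move: (none k); rewrite hb andbT => /negbFE/eqP ->.
Qed.

Lemma pmmul_entry0 (A B : gmx) x y : (forall k, B k y = None) -> pmul A B x y = None.
Proof. by move=> hB; rewrite mxE; case: pickP => [k /andP[_]|//]; rewrite hB. Qed.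

Lemma std_mact_some (A : gmx) i j a h :
  (forall x, A x i != None -> x = j) -> A j i = Some a ->
  smact A (Some (h, i)) = Some (a * h, j).
Proof.
move=> hj ha; rewrite /std_mact; case: pickP => [x /hj -> | none]; first by rewrite ha.
by move: (none j); rewrite ha.
Qed.

Lemma std_mact_none (A : gmx) i h : (forall x, A x i = None) -> smact A (Some (h, i)) = None.
Proof. by move=> hA; rewrite /std_mact; case: pickP => [x|//]; rewrite hA. Qed.

Lemma std_mact_pmono (A : gmx) i j a h : pm A -> A j i = Some a ->
  smact A (Some (h, i)) = Some (a * h, j).
Proof. by move=> hA ha; apply: std_mact_some (pmono_col_some hA ha) ha. Qed.

Lemma std_mact_eq_col (A B : gmx) i h : (forall x, A x i = B x i) ->
  smact A (Some (h, i)) = smact B (Some (h, i)).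
Proof.
move=> hAB; rewrite /std_mact (eq_pick (fun j => congr1 (fun a => a != None) (hAB j))).
by case: pickP => // j _; rewrite hAB.
Qed.

Lemma std_mact_delta j i g h i' :
  smact (delta_gmx j i g) (Some (h, i')) = if i' == i then Some (g * h, j) else None.
Proof.
case: (eqVneq i' i) => [->|ne].
  by apply: std_mact_some => [x|]; rewrite mxE ?eqxx ?andbT //; case: (x =P j).
by apply: std_mact_none => x; rewrite mxE (negbTE ne) andbF.
Qed.

Lemma std_mact_scal g h i : smact (scal_gmx gT n g) (Some (h, i)) = Some (g * h, i).
Proof. by apply: std_mact_some => [x|]; rewrite mxE ?eqxx //; case: (x =P i). Qed.

Lemma pmmul_delta_entry (A : gmx) i l g x y :
  pmul A (delta_gmx i l g) x y = if y == l then gmul gT (A x i) (Some g) else None.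
Proof.
case: (eqVneq y l) => [->|ne].
  by apply: pmmul_entry => [k|]; rewrite mxE ?eqxx ?andbT //; case: (k =P i).
by apply: pmmul_entry0 => k; rewrite mxE (negbTE ne) andbF.
Qed.

Lemma pmmul_delta j i g i' l h :
  pmul (delta_gmx j i g) (delta_gmx i' l h) =
  if i' == i then delta_gmx j l (g * h) else zero_gmx gT n.
Proof.
apply/matrixP => x y; rewrite pmmul_delta_entry.
by case: (eqVneq i' i) => [->|ne]; rewrite !mxE ?eqxx ?(negbTE ne) ?andbF;
  case: (x == j); case: (y == l).
Qed.

Lemma pmmul_col_delta (A : gmx) i j a l g : pm A -> A j i = Some a ->
  pmul A (delta_gmx i l g) = delta_gmx j l (a * g).
Proof.
move=> hA ha; apply/matrixP => x y; rewrite pmmul_delta_entry mxE.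
case: (eqVneq x j) => [->|ne]; first by rewrite ha; case: (y == l).
case e: (A x i) => [b|] /=; last by case: (y == l).
have xj : x = j by apply: (pmono_col_some hA ha); rewrite e.
by rewrite xj eqxx in ne.
Qed.

Lemma pmmul_zero_col_delta (A : gmx) i l g : (forall x, A x i = None) ->
  pmul A (delta_gmx i l g) = zero_gmx gT n.
Proof.
by move=> hA; apply/matrixP => x y; rewrite pmmul_delta_entry !mxE hA; case: (y == l).
Qed.

Lemma mx_le_entry (A m : gmx) i j b :
  pm A -> pm m -> mx_le gT n A m -> A j i = Some b -> m j i = Some b.
Proof.
move=> hA hm hle hb.
have hm1 : smact m (Some (1, i)) = Some (b * 1, j).
  by rewrite -(std_mact_pmono _ hA hb); apply: hle; rewrite (std_mact_pmono _ hA hb).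
case: (pmono_colP i hm) => [m0 | [j' [a [ha _]]]].
  by rewrite std_mact_none in hm1.
by rewrite (std_mact_pmono _ hm ha) !mulg1 in hm1; case: hm1 => <- <-.
Qed.

Lemma scal1_lub_diag_delta :
  is_lub _ (mx_le gT n) pm (fun A => exists i, A = delta_gmx i i 1) (scal_gmx gT n 1).
Proof.
split; first exact: pmono_scal.
- move=> _ [i ->] [[h i']|] //.
  by rewrite std_mact_delta std_mact_scal; case: eqVneq => // ->.
- move=> y _ hy [[h i]|] // _.
  have := hy _ (ex_intro _ i erefl) (Some (h, i)).
  by rewrite std_mact_delta eqxx std_mact_scal; apply.
Qed.

Lemma lub_col_support (S : gmx -> Prop) m i j a : (forall A, S A -> pm A) ->
  is_lub _ (mx_le gT n) pm S m -> m j i = Some a ->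
  exists A j' b, S A /\ A j' i = Some b.
Proof.
move=> hS [hm hub hleast] ha; apply: NNPP => nowit.
(* Otherwise m with its i-th column cleared is a smaller upper bound of S. *)
pose m' : gmx := \matrix_(x, y) if y == i then None else m x y.
have hm' : pm m' by apply: (pmono_subsupport hm) => x y; rewrite mxE; case: (y == i).
have hub' : forall A, S A -> mx_le gT n A m'.
  move=> A hSA [[h i']|] //; case: (eqVneq i' i) => [-> | ne] nzA.
    case: (pmono_colP i (hS A hSA)) => [A0 | [j' [b [hb _]]]].
      by rewrite std_mact_none in nzA.
    by case: nowit; exists A, j', b.
  rewrite -(hub A hSA _ nzA); apply: std_mact_eq_col => x.
  by rewrite mxE (negbTE ne).
have m'0 : smact m' (Some (1, i)) = None.
  by apply: std_mact_none => x; rewrite mxE eqxx.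
have m1 : smact m (Some (1, i)) <> None by rewrite (std_mact_pmono _ hm ha).
by move: (hleast m' hm' hub' _ m1); rewrite m'0 => /esym.
Qed.

End MonomialMatrices.

Section RepresentationFacts.
Variables (gT : finGroupType) (n : nat) (V : rep gT n).
Hypothesis hV : is_rep_In gT n V.
Local Notation pm := (pmono gT n).
Local Notation pmul := (pmmul gT n).
Local Notation act := (Defs.mact gT n V).
Local Notation ga := (Defs.gact gT n V).
Local Notation z := (Defs.zero gT n V).

Lemma gact1 v : ga 1 v = v. Proof. by case: hV => [[]]. Qed.
Lemma gactM g h v : ga (g * h) v = ga g (ga h v). Proof. by case: hV => [[]]. Qed.
Lemma gact0 g : ga g z = z. Proof. by case: hV => [[]]. Qed.
Lemma gact_free g v : v <> z -> ga g v = v -> g = 1.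
Proof. by case: hV => [[_ _ _ free]] _ _ _ _; apply: free. Qed.
Lemma gactK g v : ga g^-1 (ga g v) = v. Proof. by rewrite -gactM mulVg gact1. Qed.
Lemma gact_eq0 g v : ga g v = z -> v = z.
Proof. by move=> e; rewrite -(gactK g v) e gact0. Qed.

Lemma mactM A B v : pm A -> pm B -> act (pmul A B) v = act A (act B v).
Proof. by case: hV => _ _ actM _ _ hA hB; apply: actM. Qed.
Lemma mact_zero_gmx v : act (zero_gmx gT n) v = z. Proof. by case: hV. Qed.
Lemma mact_scal g v : act (scal_gmx gT n g) v = ga g v. Proof. by case: hV. Qed.
Lemma mact_vmorph A : pm A -> vmorph gT n V V (act A).
Proof. by case: hV => _ morph _ _ _; apply: morph. Qed.
Lemma mact0 A : pm A -> act A z = z. Proof. by case/mact_vmorph. Qed.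
Lemma mact_gact A g v : pm A -> act A (ga g v) = ga g (act A v).
Proof. by case/mact_vmorph. Qed.

Lemma mact_delta j i g l h v :
  act (delta_gmx j i g) (act (delta_gmx i l h) v) = act (delta_gmx j l (g * h)) v.
Proof. by rewrite -mactM ?pmono_delta // pmmul_delta eqxx. Qed.

Lemma mact_delta_neq j i g i' l h v : i' != i ->
  act (delta_gmx j i g) (act (delta_gmx i' l h) v) = z.
Proof. by move=> ne; rewrite -mactM ?pmono_delta // pmmul_delta (negbTE ne) mact_zero_gmx. Qed.

Lemma mact_delta_gact j i g v : act (delta_gmx j i g) v = ga g (act (delta_gmx j i 1) v).
Proof.
have gjj : scal_gmx gT n g j j = Some g by rewrite mxE eqxx.
rewrite -mact_scal -mactM ?pmono_delta ?pmono_scal //.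
by rewrite (pmmul_col_delta _ _ (pmono_scal n g) gjj) mulg1.
Qed.

Definition gorb (v w : V) : bool := [exists g, w == ga g v].

Lemma gorb_refl v : gorb v v.
Proof. by apply/existsP; exists 1; rewrite gact1. Qed.

Lemma gorb_gactr v h w : gorb v (ga h w) = gorb v w.
Proof.
apply/existsP/existsP => -[g /eqP e]; last by exists (h * g); rewrite e gactM.
by exists (h^-1 * g); rewrite gactM -e gactK.
Qed.

Lemma gorb_gactl v h : gorb (ga h v) =1 gorb v.
Proof.
move=> w; apply/existsP/existsP => -[g /eqP ->]; first by exists (g * h); rewrite gactM.
by exists (g * h^-1); rewrite gactM gactK.
Qed.

Definition orbit_repr (v : V) : V := odflt z [pick w | gorb v w].

Lemma orbit_repr_gact v h : orbit_repr (ga h v) = orbit_repr v.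
Proof. by rewrite /orbit_repr (eq_pick (gorb_gactl v h)). Qed.

Lemma orbit_repr_in v : exists g, orbit_repr v = ga g v.
Proof.
rewrite /orbit_repr; case: pickP => [w /existsP [g /eqP ->] | none]; first by exists g.
by move: (none v); rewrite gorb_refl.
Qed.

End RepresentationFacts.

Section DiagonalSupport.
Variables (gT : finGroupType) (n : nat) (V : rep gT n).
Hypothesis hV : is_rep_In gT n V.
Local Notation pm := (pmono gT n).
Local Notation pmul := (pmmul gT n).
Local Notation act := (Defs.mact gT n V).
Local Notation ga := (Defs.gact gT n V).
Local Notation z := (Defs.zero gT n V).
Local Notation E i := (delta_gmx i i 1).

Definition diag_supported : Prop := forall v, v <> z -> exists i, act (E i) v = v.

Lemma mact_fixed_delta A i v : pm A -> act (E i) v = v -> act A v = act (pmul A (E i)) v.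
Proof. by move=> hA hv; rewrite mactM ?pmono_delta // hv. Qed.

Lemma mact_mx_le A m i j b v : pm A -> pm m -> mx_le gT n A m -> A j i = Some b ->
  act (E i) v = v -> act A v = act m v.
Proof.
move=> hA hm hle hb hv; rewrite (mact_fixed_delta hA hv) (mact_fixed_delta hm hv).
by rewrite (pmmul_col_delta _ _ hA hb) (pmmul_col_delta _ _ hm (mx_le_entry hA hm hle hb)).
Qed.

Section Supported.
Hypothesis hQ : diag_supported.

Lemma diag_supported_col A v : pm A -> act A v <> z ->
  exists i j b, act (E i) v = v /\ A j i = Some b.
Proof.
move=> hA nz; have [i hi] : exists i, act (E i) v = v.
  by apply: hQ => v0; apply: nz; rewrite v0 mact0.
exists i; case: (pmono_colP i hA) => [A0 | [j [b [hb _]]]]; last by exists j, b.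
by case: nz; rewrite (mact_fixed_delta hA hi) pmmul_zero_col_delta // mact_zero_gmx.
Qed.

Lemma diag_supported_join S m : (forall A, S A -> pm A) -> is_lub _ (mx_le gT n) pm S m ->
  is_lub _ (end_le gT n V) (vmorph gT n V V) (fun f => exists A, S A /\ f =1 act A) (act m).
Proof.
move=> hS lub; have [hm hub _] := lub; split; first exact: mact_vmorph.
- move=> f [A [hSA ef]] x; rewrite !ef => nz.
  have [i [j [b [hi hb]]]] := diag_supported_col (hS A hSA) nz.
  by rewrite (mact_mx_le (hS A hSA) hm (hub A hSA) hb hi).
- move=> f hf fub x nz.
  have [i [j [a [hi ha]]]] := diag_supported_col hm nz.
  have [A [j' [b [hSA hb]]]] := lub_col_support hS lub ha.
  have eAm := mact_mx_le (hS A hSA) hm (hub A hSA) hb hi.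
  by rewrite -eAm; apply: fub; [exists A | rewrite eAm].
Qed.

Lemma diag_supported_is_rep_M : is_rep_M gT n V.
Proof. by split=> // S hS m; apply: diag_supported_join. Qed.

End Supported.

Definition kill_orbit (v x : V) : V := if gorb v x then z else x.

Lemma kill_orbit_vmorph v : vmorph gT n V V (kill_orbit v).
Proof.
rewrite /kill_orbit; split; first by case: ifP.
- by move=> g x; rewrite gorb_gactr //; case: ifP; rewrite ?gact0.
- move=> v1 v2; case: ifP => _ //; case: ifP => _ // -> _.
  by exists 1; rewrite gact1.
Qed.

Lemma is_rep_M_diag_supported : is_rep_M gT n V -> diag_supported.
Proof.
case=> _ hM v nz; apply: NNPP => nofix.
pose S (A : gmx gT n) : Prop := exists i, A = E i.
have hS : forall A, S A -> pm A by move=> _ [i ->]; apply: pmono_delta.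
have [_ hub hleast] := hM S hS _ (scal1_lub_diag_delta gT n).
have fixed i x : act (E i) x <> z -> act (E i) x = x.
  move=> nzx; rewrite -[in RHS](gact1 hV x) -(mact_scal hV); symmetry.
  by apply: (hub (act (E i))) nzx; exists (E i); split; [exists i|].
have killed i : act (E i) v = z.
  by apply: NNPP => nzv; apply: nofix; exists i; apply: fixed.
have kill_ub f : (exists A, S A /\ f =1 act A) -> end_le gT n V f (kill_orbit v).
  move=> [_ [[i ->] ef]] x; rewrite !ef => nzx.
  rewrite (fixed _ _ nzx) /kill_orbit; case: ifP => // /existsP [g /eqP ex].
  by case: nzx; rewrite ex mact_gact ?pmono_delta // killed gact0.
move: (hleast _ (kill_orbit_vmorph v) kill_ub v).
by rewrite (mact_scal hV) (gact1 hV) /kill_orbit (gorb_refl hV) => /(_ nz)/esym.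
Qed.

End DiagonalSupport.

Section StandardRepresentation.
Variables (gT : finGroupType) (n : nat).
Hypothesis hab : abelian [set: gT].
Local Notation pm := (pmono gT n).
Local Notation pmul := (pmmul gT n).
Local Notation smact := (std_mact gT n).
Local Notation std := (std_rep gT n).

Lemma std_vobj : vobj gT n std.
Proof.
split=> [[[h i]|] | g g' [[h i]|] | // | g [[h i]|] // _ [gh]] //=.
- by rewrite mul1g.
- by rewrite mulgA.
- by apply: (mulIg h); rewrite mul1g.
Qed.

Lemma std_gactE g h i : std_gact gT n g (Some (h, i)) = Some (g * h, i).
Proof. by []. Qed.

Lemma std_mact_gact A g x : pm A -> smact A (std_gact gT n g x) = std_gact gT n g (smact A x).
Proof.
move=> hA; case: x => [[h i]|] //; rewrite std_gactE.
case: (pmono_colP i hA) => [A0 | [j [a [ha hj]]]]; first by rewrite !std_mact_none.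
by rewrite !(std_mact_some _ hj ha) std_gactE !mulgA (abelianT_mulgC hab a g).
Qed.

Lemma std_mact_vmorph A : pm A -> vmorph gT n std std (smact A).
Proof.
move=> hA; split=> //; first by move=> g x; exact: (std_mact_gact g x hA).
move=> [[h1 i1]|] [[h2 i2]|] //.
case: (pmono_colP i1 hA) => [A0 | [j1 [a1 [ha1 hj1]]]]; first by rewrite std_mact_none.
case: (pmono_colP i2 hA) => [A0 | [j2 [a2 [ha2 hj2]]]]; first by rewrite (std_mact_none _ A0).
rewrite (std_mact_some _ hj1 ha1) (std_mact_some _ hj2 ha2) => -[e1 ej] _; subst j2.
have ei : i1 = i2 by apply: (pmono_row_uniq (j := j1) hA); rewrite ?ha1 ?ha2.
subst i2; rewrite ha1 in ha2; case: ha2 e1 => <- e1.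
by exists (h2 * h1^-1); rewrite /= mulgKV.
Qed.

Lemma std_mactM A B x : pm A -> pm B -> smact (pmul A B) x = smact A (smact B x).
Proof.
move=> hA hB; case: x => [[h i]|] //.
case: (pmono_colP i hB) => [B0 | [j [b [hb hj]]]].
  by rewrite !std_mact_none // => x; apply: pmmul_entry0.
have ABi x : pmul A B x i = gmul gT (A x j) (Some b) := pmmul_entry _ _ hj hb.
rewrite (std_mact_some _ hj hb).
case: (pmono_colP j hA) => [A0 | [l [a [ha hl]]]].
  by rewrite !std_mact_none // => x; rewrite ABi A0.
rewrite (std_mact_some _ hl ha) (@std_mact_some _ _ _ _ l (a * b)) ?mulgA ?ABi ?ha //.
by move=> x; rewrite ABi; case e: (A x j) => [a'|] //= _; apply: hl; rewrite e.
Qed.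

Lemma std_rep_In : is_rep_In gT n std.
Proof.
split; first exact: std_vobj.
- exact: std_mact_vmorph.
- by move=> A B hA hB x; exact: std_mactM.
- by move=> [[h i]|] //; apply: std_mact_none => x; rewrite mxE.
- by move=> g [[h i]|] //; apply: std_mact_scal.
Qed.

Lemma std_rep_simple : (0 < n)%N -> rep_simple gT n std.
Proof.
move=> n_gt0; split; first exact: std_rep_In.
  by exists (Some (1, Ordinal n_gt0)).
move=> S S0 _ SA; case: (classic (exists h i, S (Some (h, i)))) => [[h [i Shi]] | none].
  right=> [[[h' i']|]]; last exact: S0.
  move: (SA (delta_gmx i' i (h' * h^-1)) _ (pmono_delta _ _ _) Shi).
  by rewrite [Defs.mact _ _ _]/= std_mact_delta eqxx mulgKV.
left=> [[[h i]|]] // Shi.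
by case: none; exists h, i.
Qed.

End StandardRepresentation.

Lemma sum_std_diag_supported (gT : finGroupType) (n k : nat) :
  diag_supported (sum_std gT n k).
Proof.
move=> [[[h i] c]|] // _; exists i.
by rewrite [Defs.mact _ _ _]/= /sum_mact std_mact_delta eqxx mul1g.
Qed.

Section Isomorphisms.
Variables (gT : finGroupType) (n : nat) (V W : rep gT n).
Hypothesis hV : is_rep_In gT n V.

Lemma rep_iso_diag_supported : rep_iso gT n V W -> diag_supported W -> diag_supported V.
Proof.
case=> f [h [_ [[h0 _ _] hact] fK _]] hW v nz.
have [i hi] : exists i, Defs.mact gT n W (delta_gmx i i 1) (f v) = f v.
  by apply: hW => fv0; apply: nz; rewrite -(fK v) fv0 h0.
by exists i; rewrite -{1}(fK v) -hact ?pmono_delta // hi fK.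
Qed.

Lemma rep_morph_inv (f : W -> V) (g : V -> W) :
  rep_morph gT n W V f -> cancel g f -> cancel f g -> rep_morph gT n V W g.
Proof.
move=> [[f0 fgact _] fmact] gK fK; split; first split.
- by rewrite -f0 fK.
- by move=> a v; rewrite -{1}(gK v) -fgact fK.
- by move=> v1 v2 e _; exists 1; rewrite (gact1 hV) -(gK v1) -(gK v2) e.
- by move=> A hA v; rewrite -{1}(gK v) -fmact // fK.
Qed.

Lemma rep_iso_of_bij (f : W -> V) : rep_morph gT n W V f -> injective f ->
  (forall v, exists x, f x = v) -> rep_iso gT n V W.
Proof.
move=> fmorph finj fsurj.
pose g (v : V) : W := odflt (zero gT n W) [pick x | f x == v].
have gK : cancel g f.
  move=> v; rewrite /g; case: pickP => [x /eqP // | none].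
  by have [x fx] := fsurj v; move: (none x); rewrite fx eqxx.
have fK : cancel f g by move=> x; apply: finj; rewrite gK.
exists g, f; split=> //; exact: (rep_morph_inv fmorph gK fK).
Qed.

End Isomorphisms.

Section Decomposition.
Variables (gT : finGroupType) (n : nat) (V : rep gT n) (i0 : 'I_n).
Hypotheses (hab : abelian [set: gT]) (hV : is_rep_In gT n V) (hQ : diag_supported V).
Local Notation act := (Defs.mact gT n V).
Local Notation ga := (Defs.gact gT n V).
Local Notation z := (Defs.zero gT n V).
Local Notation E j i := (delta_gmx j i 1).

Definition orbit_reps : seq V :=
  undup [seq orbit_repr v | v <- enum V & (v != z) && (act (E i0 i0) v == v)].

Local Notation k := (size orbit_reps).
Local Notation r c := (nth z orbit_reps c).

Lemma orbit_reps_nth (c : 'I_k) :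
  [/\ r c <> z, act (E i0 i0) (r c) = r c & orbit_repr (r c) = r c].
Proof.
move: (mem_nth z (ltn_ord c)); rewrite mem_undup => /mapP [v].
rewrite mem_filter mem_enum andbT => /andP [/eqP nz /eqP vfix] ->.
have [g eg] := orbit_repr_in hV v; rewrite eg; split.
- by move/(gact_eq0 hV).
- by rewrite (mact_gact hV) ?pmono_delta // vfix.
- by rewrite (orbit_repr_gact hV) eg.
Qed.

Lemma orbit_reps_gact_inj (c c' : 'I_k) h h' : ga h (r c) = ga h' (r c') -> c = c' /\ h = h'.
Proof.
move=> e; have [nz _ reprc] := orbit_reps_nth c; have [_ _ reprc'] := orbit_reps_nth c'.
have ec : c = c'.
  apply/ord_inj/eqP; rewrite -(nth_uniq z (ltn_ord c) (ltn_ord c') (undup_uniq _)).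
  by rewrite -reprc -reprc' -(orbit_repr_gact hV (r c) h) e (orbit_repr_gact hV).
subst c'; split=> //; apply/eqP; rewrite eq_sym eq_mulVg1; apply/eqP.
by apply: (gact_free hV nz); rewrite (gactM hV) e (gactK hV).
Qed.

Definition orbit_decomp (x : sum_carrier gT n k) : V :=
  if x is Some (h, i, c) then ga h (act (E i i0) (r c)) else z.

Lemma orbit_decomp_back h i c : act (E i0 i) (orbit_decomp (Some (h, i, c))) = ga h (r c).
Proof.
have [_ rfix _] := orbit_reps_nth c.
by rewrite /= (mact_gact hV) ?pmono_delta // (mact_delta hV) mulg1 rfix.
Qed.

Lemma orbit_decomp_neq0 h i c : orbit_decomp (Some (h, i, c)) <> z.
Proof.
have [nz _ _] := orbit_reps_nth c; move=> e; apply: nz; apply: (gact_eq0 hV (g := h)).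
by rewrite -(orbit_decomp_back h i c) e (mact0 hV) ?pmono_delta.
Qed.

Lemma orbit_decomp_proj h i c j : act (E j j) (orbit_decomp (Some (h, i, c))) =
  if i == j then orbit_decomp (Some (h, i, c)) else z.
Proof.
rewrite /= (mact_gact hV) ?pmono_delta //; case: eqVneq => [->|ne].
  by rewrite (mact_delta hV) mulg1.
by rewrite (mact_delta_neq hV) ?(gact0 hV) // eq_sym.
Qed.

Lemma orbit_decomp_inj : injective orbit_decomp.
Proof.
move=> [[[h i] c]|] [[[h' i'] c']|] // e; last first.
- by case: (orbit_decomp_neq0 (esym e)).
- by case: (orbit_decomp_neq0 e).
have ei : i = i'.
  have := orbit_decomp_proj h i c i'; rewrite e orbit_decomp_proj eqxx.
  by case: eqVneq => // _ e0; case: (orbit_decomp_neq0 e0).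
subst i'; have := orbit_decomp_back h i c; rewrite e orbit_decomp_back.
by case/orbit_reps_gact_inj => -> ->.
Qed.

Lemma orbit_decomp_surj v : exists x, orbit_decomp x = v.
Proof.
case: (eqVneq v z) => [-> | /eqP nz]; first by exists None.
have [i vfix] := hQ nz.
pose w := act (E i0 i) v.
have wback : act (E i i0) w = v by rewrite (mact_delta hV) mulg1.
have wfix : act (E i0 i0) w = w by rewrite (mact_delta hV) mulg1.
have wnz : w != z.
  by apply/eqP=> w0; apply: nz; rewrite -wback w0 (mact0 hV) ?pmono_delta.
have [g wrepr] := orbit_repr_in hV w.
have win : orbit_repr w \in orbit_reps.
  by rewrite mem_undup; apply: map_f; rewrite mem_filter mem_enum wnz wfix eqxx.
have ci : (index (orbit_repr w) orbit_reps < k)%N by rewrite index_mem.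
exists (Some (g^-1, i, Ordinal ci)).
by rewrite /= (nth_index z win) wrepr -(mact_gact hV) ?pmono_delta // (gactK hV).
Qed.

Lemma orbit_decomp_morph : rep_morph gT n (sum_std gT n k) V orbit_decomp.
Proof.
split; first split.
- by [].
- by move=> g [[[h i] c]|]; rewrite /= ?(gactM hV) ?(gact0 hV).
- move=> v1 v2 e _; exists 1; rewrite -(orbit_decomp_inj e).
  by case: v1 {e} => [[[h i] c]|] //=; rewrite mul1g.
move=> A hA [[[h i] c]|]; last by rewrite /= (mact0 hV).
rewrite [Defs.mact _ _ _]/= /sum_mact [RHS]/= (mact_gact hV) // -(mactM hV) ?pmono_delta //.
case: (pmono_colP i hA) => [A0 | [j [a [ha hj]]]].
  by rewrite (std_mact_none _ A0) (pmmul_zero_col_delta _ _ A0) (mact_zero_gmx hV) (gact0 hV).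
rewrite (std_mact_some _ hj ha) (pmmul_col_delta _ _ hA ha) mulg1 /=.
by rewrite (mact_delta_gact hV j i0 a) -(gactM hV) (abelianT_mulgC hab a h).
Qed.

End Decomposition.

Lemma diag_supported_sum_std_iso (gT : finGroupType) (n : nat) (V : rep gT n) :
  abelian [set: gT] -> is_rep_In gT n V -> diag_supported V -> (0 < n)%N ->
  exists k, rep_iso gT n V (sum_std gT n k).
Proof.
move=> hab hV hQ n_gt0; pose i0 := Ordinal n_gt0.
exists (size (orbit_reps V i0)).
exact: (rep_iso_of_bij hV (orbit_decomp_morph i0 hab hV) (@orbit_decomp_inj _ _ _ i0 hV)
  (orbit_decomp_surj i0 hV hQ)).
Qed.

Theorem mainTheorem15 (gT : finGroupType) (n : nat) :
  abelian [set: gT] -> (0 < n)%N ->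
  rep_simple gT n (std_rep gT n) /\
  forall V : rep gT n, is_rep_In gT n V ->
    (is_rep_M gT n V <-> exists k : nat, rep_iso gT n V (sum_std gT n k)).
Proof.
move=> hab n_gt0; split; first exact: std_rep_simple.
move=> V hV; split.
- by move=> hM; apply: diag_supported_sum_std_iso => //; apply: is_rep_M_diag_supported.
- case=> k iso; apply: (diag_supported_is_rep_M hV).
  exact: (rep_iso_diag_supported iso (@sum_std_diag_supported gT n k)).
Qed.
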